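(* Let $H$ be a Hermitian operator on $\mathcal H_a\otimes\mathcal H_b$ (finite-dimensional). Then $\mathcal C_{\rm P}^{1}(H)=\|H\|_\infty$ if and only if both the eigenspace of $H$ for its smallest eigenvalue and the eigenspace of $H$ for its largest eigenvalue contain a product vector $\ket{\phi}_a\otimes\ket{\psi}_b$.
   Context: For a density operator $\rho$ on $\mathcal H_a\otimes\mathcal H_b$, the parallel capacity is $\mathcal C_{\rm P}(\rho,H):=\max_{U_a,U_b}\mathrm{tr}[(U_a\otimes U_b)\rho(U_a\otimes U_b)^\dagger H]-\min_{U_a,U_b}\mathrm{tr}[(U_a\otimes U_b)\rho(U_a\otimes U_b)^\dagger H]$, where $U_a,U_b$ range over all unitaries on $\mathcal H_a$, $\mathcal H_b$ respectively. Let $\mathcal S^1$ be the set of separable density operators on $\mathcal H_a\otimes\mathcal H_b$, and $\mathcal C_{\rm P}^1(H):=\max_{\rho\in\mathcal S^1}\mathcal C_{\rm P}(\rho,H)$. With $E_0,E_{\max}$ the smallest and largest eigenvalues of $H$, $\|H\|_\infty:=E_{\max}-E_0$. *)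

From HB Require Import structures.
From mathcomp Require Import all_boot all_order all_algebra.
From mathcomp Require Import classical_sets reals.
From mathcomp Require Import complex mxtens.

Set Implicit Arguments.
Unset Strict Implicit.
Unset Printing Implicit Defensive.

Import Order.TTheory GRing.Theory Num.Theory.
Local Open Scope ring_scope.
Local Open Scope classical_set_scope.
Local Open Scope sesquilinear_scope.

Section QDefs.
Variable R : realType.
Local Notation C := R[i].

Definition RtoC (x : R) : C := Complex x 0.

Definition is_hermitian n (A : 'M[C]_n) : Prop := A \is hermsymmx.

Definition psd n (A : 'M[C]_n) : Prop :=
  is_hermitian A /\ forall v : 'cV[C]_n, 0 <= (v ^t* *m A *m v) 0 0.

Definition density n (rho : 'M[C]_n) : Prop := psd rho /\ \tr rho = 1.

Definition unitary n (U : 'M[C]_n) : Prop := U \is unitarymx.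

(* the set { tr[(Ua (x) Ub) rho (Ua (x) Ub)^dagger H] : Ua, Ub unitary }
   (real parts; the values are real for Hermitian rho, H) *)
Definition local_energies da db (rho H : 'M[C]_(da * db)) : set R :=
  [set x | exists (Ua : 'M[C]_da) (Ub : 'M[C]_db),
     unitary Ua /\ unitary Ub /\
     x = @complex.Re R (\tr ((Ua *t Ub) *m rho *m (Ua *t Ub) ^t* *m H))].

Definition CP da db (rho H : 'M[C]_(da * db)) : R :=
  sup (local_energies rho H) - inf (local_energies rho H).

Definition separable da db (rho : 'M[C]_(da * db)) : Prop :=
  exists (k : nat) (p : 'I_k -> R) (ra : 'I_k -> 'M[C]_da) (rb : 'I_k -> 'M[C]_db),
    (forall i, 0 <= p i) /\ \sum_(i < k) p i = 1 /\
    (forall i, density (ra i) /\ density (rb i)) /\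
    rho = \sum_(i < k) RtoC (p i) *: (ra i *t rb i).

Definition CP1 da db (H : 'M[C]_(da * db)) : R :=
  sup [set x | exists rho, separable rho /\ x = CP rho H].

Definition is_min_eigenvalue n (H : 'M[C]_n) (E0 : R) : Prop :=
  eigenvalue H (RtoC E0) /\ forall a, eigenvalue H a -> RtoC E0 <= a.

Definition is_max_eigenvalue n (H : 'M[C]_n) (Emax : R) : Prop :=
  eigenvalue H (RtoC Emax) /\ forall a, eigenvalue H a -> a <= RtoC Emax.

Definition eigenspace_has_product_vector da db (H : 'M[C]_(da * db)) (E : R) : Prop :=
  exists (phi : 'cV[C]_da) (psi : 'cV[C]_db),
    phi != 0 /\ psi != 0 /\ H *m (phi *t psi) = RtoC E *: (phi *t psi).

End QDefs.

(* Write H = E0 + N0^* N0 and -H = -Emax + N1^* N1 (spectral theorem).  Local unitaries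
   turn a separable state into a mixture of normalised product states, so every local
   energy lies in [E0, Emax] and C_P^1(H) <= Emax - E0.  If both extreme eigenspaces
   contain product vectors, local unitaries rotate the product ground state onto the
   product top state, attaining both bounds.  Conversely, if C_P^1(H) = Emax - E0, some
   separable states have local energies arbitrarily close to E0; by averaging, product
   unit vectors u (x) w make <u (x) w| N0^* N0 |u (x) w> arbitrarily small, and by
   compactness of the product of unit spheres it vanishes for one of them, which is then
   a ground state.  The top eigenspace is the ground eigenspace of -H. *)

From HB Require Import structures.
From mathcomp Require Import all_boot all_order all_algebra.
From mathcomp Require Import classical_sets reals.
From mathcomp Require Import complex mxtens.
From mathcomp Require Import boolp functions topology normedtype derive.
From mathcomp Require Import lra.

Set Implicit Arguments.
Unset Strict Implicit.
Unset Printing Implicit Defensive.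

Import Order.TTheory GRing.Theory Num.Theory.
Import numFieldTopology.Exports numFieldNormedType.Exports.
Local Open Scope ring_scope.
Local Open Scope sesquilinear_scope.

Section QuadraticForms.
Variable R : realType.
Local Notation C := R[i].

Lemma trmxCM m n p (A : 'M[C]_(m, n)) (B : 'M[C]_(n, p)) : (A *m B)^t* = B^t* *m A^t*.
Proof. by rewrite trmx_mul map_mxM. Qed.

Lemma trmxCZ m n (c : C) (A : 'M[C]_(m, n)) : (c *: A)^t* = c^* *: A^t*.
Proof. by apply/matrixP=> i j; rewrite !mxE rmorphM. Qed.

Lemma trmxC_tens m n p q (A : 'M[C]_(m, n)) (B : 'M[C]_(p, q)) :
  (A *t B)^t* = A^t* *t B^t*.
Proof. by apply/matrixP=> i j; rewrite !mxE rmorphM. Qed.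

Lemma trmxC1 n : (1%:M : 'M[C]_n)^t* = 1%:M.
Proof. by rewrite tr_scalar_mx map_scalar_mx rmorph1. Qed.

Definition sqnorm n (v : 'cV[C]_n) : C := (v^t* *m v) 0 0.
Definition qform n (v : 'cV[C]_n) (M : 'M[C]_n) : C := (v^t* *m M *m v) 0 0.

Lemma sqnormE n (v : 'cV[C]_n) : sqnorm v = \sum_i `|v i 0| ^+ 2.
Proof. by rewrite /sqnorm mxE; apply: eq_bigr => i _; rewrite !mxE normCK mulrC. Qed.

Lemma sqnorm_ge0 n (v : 'cV[C]_n) : 0 <= sqnorm v.
Proof. by rewrite sqnormE sumr_ge0 // => i _; rewrite exprn_ge0. Qed.

Lemma sqnorm_eq0 n (v : 'cV[C]_n) : (sqnorm v == 0) = (v == 0).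
Proof.
apply/idP/eqP => [|->]; last by rewrite /sqnorm mulmx0 mxE.
rewrite sqnormE psumr_eq0 => [/allP v0|i _]; last by rewrite exprn_ge0.
apply/matrixP => i j; rewrite [j]ord1 mxE.
by have := v0 i (mem_index_enum _); rewrite sqrf_eq0 normr_eq0 => /eqP.
Qed.

Lemma sqnorm_eq1_neq0 n (v : 'cV[C]_n) : sqnorm v = 1 -> v != 0.
Proof. by rewrite -sqnorm_eq0 => ->; rewrite oner_eq0. Qed.

Lemma qform1 n (v : 'cV[C]_n) : qform v 1%:M = sqnorm v.
Proof. by rewrite /qform mulmx1. Qed.

Lemma qform_gram n p (N : 'M[C]_(p, n)) (v : 'cV[C]_n) :
  qform v (N^t* *m N) = sqnorm (N *m v).
Proof. by rewrite /qform /sqnorm trmxCM !mulmxA. Qed.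

Lemma qform_gram_ge0 n p (N : 'M[C]_(p, n)) (v : 'cV[C]_n) : 0 <= qform v (N^t* *m N).
Proof. by rewrite qform_gram sqnorm_ge0. Qed.

Lemma qform_gram_eq0 n p (N : 'M[C]_(p, n)) (v : 'cV[C]_n) :
  qform v (N^t* *m N) = 0 -> N^t* *m N *m v = 0.
Proof. by rewrite qform_gram => /eqP; rewrite sqnorm_eq0 -mulmxA => /eqP ->; rewrite mulmx0. Qed.

Lemma qformZ n (a : C) (v : 'cV[C]_n) M : qform (a *: v) M = a^* * a * qform v M.
Proof. by rewrite /qform trmxCZ -!scalemxAl -scalemxAr !mxE mulrA. Qed.

Lemma sqnorm_tens m n (x : 'cV[C]_m) (y : 'cV[C]_n) : sqnorm (x *t y) = sqnorm x * sqnorm y.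
Proof.
rewrite /sqnorm (trmxC_tens x y) (tensmx_mul (x^t*) (y^t*) x y) mxE.
by rewrite (ord1 (mxtens_unindex _).1) (ord1 (mxtens_unindex _).2).
Qed.

Lemma mxtrace_outer n (v : 'cV[C]_n) (M : 'M[C]_n) : \tr (v *m v^t* *m M) = qform v M.
Proof. by rewrite -mulmxA mxtrace_mulC /mxtrace big_ord1. Qed.

Lemma qform_eigen n (M : 'M[C]_n) (v : 'cV[C]_n) (E : C) :
  M *m v = E *: v -> sqnorm v = 1 -> qform v M = E.
Proof. by move=> Mv v1; rewrite /qform -mulmxA Mv -scalemxAr mxE -/(sqnorm v) v1 mulr1. Qed.

End QuadraticForms.

Section Spectral.
Variable R : realType.
Local Notation C := R[i].

Lemma trmxC_unitaryK n (P : 'M[C]_n) : P \is unitarymx -> P^t* *m P = 1%:M.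
Proof. by move=> uP; have := mulmxKtV (1%:M : 'M[C]_n) uP erefl; rewrite mul1mx. Qed.

Lemma sqnorm_row_unitary m n (P : 'M[C]_(m, n)) (i : 'I_m) : P \is unitarymx ->
  sqnorm ((row i P)^t*) = 1.
Proof.
move=> /unitarymxP /matrixP /(_ i i); rewrite !mxE eqxx mulr1n => <-.
by rewrite /sqnorm trmxCK mxE; apply: eq_bigr => j _; rewrite !mxE.
Qed.

Lemma hermitian_spectral_decomp n (A : 'M[C]_n) : A \is hermsymmx ->
  A = (spectralmx A)^t* *m diag_mx (spectral_diag A) *m spectralmx A.
Proof.
move=> hA; have /orthomx_spectralP := hermitian_normalmx hA.
by rewrite invmx_unitary // spectral_unitarymx.
Qed.

Lemma row_spectralmx_eigen n (A : 'M[C]_n) (i : 'I_n) : A \is hermsymmx ->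
  row i (spectralmx A) *m A = spectral_diag A 0 i *: row i (spectralmx A).
Proof.
move=> hA; have uP := spectral_unitarymx A; set P := spectralmx A in uP *.
rewrite -row_mul {1}(hermitian_spectral_decomp hA) -/P !mulmxA.
rewrite (unitarymxP uP) mul1mx mul_diag_mx.
by apply/rowP => j; rewrite !mxE.
Qed.

Lemma eigenvalue_spectral_diag n (A : 'M[C]_n) (i : 'I_n) : A \is hermsymmx ->
  eigenvalue A (spectral_diag A 0 i).
Proof.
move=> hA; apply/eigenvalueP; exists (row i (spectralmx A)).
  exact: row_spectralmx_eigen.
apply: contra_eqN (sqnorm_row_unitary i (spectral_unitarymx A)) => /eqP ->.
by rewrite trmx0 map_mx0 /sqnorm mulmx0 mxE eq_sym oner_eq0.
Qed.

(* Write [s (A - c)] as [P^* diag(s (d - c)) P] and take the square root of the diagonal. *)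
Lemma hermitian_gram_shift n (A : 'M[C]_n) (s c : C) : A \is hermsymmx ->
  (forall i, 0 <= s * (spectral_diag A 0 i - c)) ->
  exists N : 'M[C]_n, s *: (A - c%:M) = N^t* *m N.
Proof.
move=> hA ge0; have uP := spectral_unitarymx A.
pose e := s *: (spectral_diag A - const_mx c).
exists (diag_mx (map_mx sqrtC e) *m spectralmx A).
have -> : s *: (A - c%:M) = (spectralmx A)^t* *m diag_mx e *m spectralmx A.
  have -> : diag_mx e = s *: (diag_mx (spectral_diag A) - c%:M).
    by apply/matrixP => a b; rewrite !mxE; case: (a == b); rewrite ?mulr1n ?mulr0n ?subrr ?mulr0.
  rewrite -scalemxAr -scalemxAl mulmxBr mulmxBl -(hermitian_spectral_decomp hA).
  by rewrite mul_mx_scalar -scalemxAl (trmxC_unitaryK uP) scalemx1.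
rewrite trmxCM !mulmxA -(mulmxA _ (_^t*)); congr (_ *m _ *m _).
apply/matrixP => i j; rewrite !mxE (bigD1 i) //= big1 ?addr0; last first.
  by move=> k /negbTE ki; rewrite !mxE ki mulr0n conjC0 mul0r.
rewrite !mxE eqxx /= mulr1n; case: eqP => [->|_]; last by rewrite !mulr0n mulr0.
have e_ge0 : 0 <= e 0 j by rewrite !mxE.
by rewrite !mulr1n conj_Creal ?sqrtC_real // -expr2 sqrtCK.
Qed.

Lemma psd_gram n (A : 'M[C]_n) : psd A -> exists N : 'M[C]_n, A = N^t* *m N.
Proof.
move=> [hA A_ge0]; have [i|N AN] := hermitian_gram_shift (s := 1) (c := 0) hA.
  have := sqnorm_row_unitary i (spectral_unitarymx A); rewrite /sqnorm trmxCK => r1.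
  have := A_ge0 ((row i (spectralmx A))^t*).
  by rewrite trmxCK row_spectralmx_eigen // -scalemxAl mxE r1 mulr1 mul1r oppr0 addr0.
by exists N; rewrite -AN scale1r raddf0 subr0.
Qed.

End Spectral.

Section SeparableStates.
Variable R : realType.
Local Notation C := R[i].

Lemma tensmx_suml m n p q k (F : 'I_k -> 'M[C]_(m, n)) (B : 'M[C]_(p, q)) :
  (\sum_i F i) *t B = \sum_i (F i *t B).
Proof.
apply/matrixP => a b; rewrite !mxE !summxE mulr_suml.
by apply: eq_bigr => i _; rewrite !mxE.
Qed.

Lemma tensmx_sumr m n p q k (A : 'M[C]_(m, n)) (F : 'I_k -> 'M[C]_(p, q)) :
  A *t (\sum_i F i) = \sum_i (A *t F i).
Proof.
apply/matrixP => a b; rewrite !mxE !summxE mulr_sumr.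
by apply: eq_bigr => i _; rewrite !mxE.
Qed.

Lemma tensmxZl m n p q (c : C) (A : 'M[C]_(m, n)) (B : 'M[C]_(p, q)) :
  (c *: A) *t B = c *: (A *t B).
Proof. by apply/matrixP => a b; rewrite !mxE mulrA. Qed.

Lemma tensmxZr m n p q (c : C) (A : 'M[C]_(m, n)) (B : 'M[C]_(p, q)) :
  A *t (c *: B) = c *: (A *t B).
Proof. by apply/matrixP => a b; rewrite !mxE mulrCA. Qed.

Lemma tens_outer m n (x : 'cV[C]_m) (y : 'cV[C]_n) :
  (x *m x^t*) *t (y *m y^t*) = (x *t y) *m (x *t y)^t*.
Proof. by rewrite trmxC_tens tensmx_mul. Qed.

Lemma tensmx_conj m n (Ua ra : 'M[C]_m) (Ub rb : 'M[C]_n) :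
  (Ua *t Ub) *m (ra *t rb) *m (Ua *t Ub)^t* = (Ua *m ra *m Ua^t*) *t (Ub *m rb *m Ub^t*).
Proof. by rewrite trmxC_tens !tensmx_mul. Qed.

Lemma gram_sum_outer m n (X : 'M[C]_(m, n)) :
  X^t* *m X = \sum_j (row j X)^t* *m ((row j X)^t*)^t*.
Proof.
apply/matrixP => a b; rewrite !mxE summxE; apply: eq_bigr => j _.
by rewrite !mxE big_ord1 !mxE conjCK.
Qed.

Lemma sum_sqnorm_rows m n (X : 'M[C]_(m, n)) :
  \sum_j sqnorm ((row j X)^t*) = \tr (X *m X^t*).
Proof.
apply: eq_bigr => j _; rewrite /sqnorm trmxCK !mxE.
by apply: eq_bigr => l _; rewrite !mxE.
Qed.

Lemma separable_local_mixture da db (rho : 'M[C]_(da * db)) (Ua : 'M[C]_da) (Ub : 'M[C]_db) :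
  separable rho -> unitary Ua -> unitary Ub ->
  exists k (p : 'I_k -> R) (x : 'I_k -> 'I_da -> 'cV[C]_da) (y : 'I_k -> 'I_db -> 'cV[C]_db),
  [/\ (forall i, 0 <= p i), \sum_i p i = 1,
     (forall i, \sum_j sqnorm (x i j) = 1), (forall i, \sum_l sqnorm (y i l) = 1) &
     (Ua *t Ub) *m rho *m (Ua *t Ub)^t* =
       \sum_i \sum_j \sum_l RtoC (p i) *: ((x i j *t y i l) *m (x i j *t y i l)^t*)].
Proof.
move=> [k [p [ra [rb [p_ge0 [p1 [dens ->]]]]]]] uA uB.
have [Sa raE] := fin_all_exists (fun i => psd_gram (dens i).1.1).
have [Sb rbE] := fin_all_exists (fun i => psd_gram (dens i).2.1).
have conjE m (U S : 'M[C]_m) : U *m (S^t* *m S) *m U^t* = (S *m U^t*)^t* *m (S *m U^t*).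
  by rewrite trmxCM trmxCK !mulmxA.
have unit_tr m (U S : 'M[C]_m) : U \is unitarymx ->
    \sum_j sqnorm ((row j (S *m U^t*))^t*) = \tr (S^t* *m S).
  move=> uU; rewrite sum_sqnorm_rows trmxCM trmxCK mulmxA -(mulmxA S).
  by rewrite (trmxC_unitaryK uU) mulmx1 mxtrace_mulC.
exists k, p, (fun i j => (row j (Sa i *m Ua^t*))^t*), (fun i l => (row l (Sb i *m Ub^t*))^t*).
split => // [i|i|].
- by rewrite unit_tr // -raE (dens i).1.2.
- by rewrite unit_tr // -rbE (dens i).2.2.
rewrite mulmx_sumr mulmx_suml; apply: eq_bigr => i _.
rewrite -scalemxAr -scalemxAl tensmx_conj raE rbE !conjE.
under eq_bigr do rewrite -scaler_sumr.
rewrite -scaler_sumr !gram_sum_outer tensmx_suml; congr (_ *: _).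
by apply: eq_bigr => j _; rewrite tensmx_sumr; apply: eq_bigr => l _; rewrite tens_outer.
Qed.

Lemma mxtrace_mixture k da db (c : 'I_k -> C) (x : 'I_k -> 'I_da -> 'cV[C]_da)
   (y : 'I_k -> 'I_db -> 'cV[C]_db) (M : 'M[C]_(da * db)) :
  \tr ((\sum_i \sum_j \sum_l c i *: ((x i j *t y i l) *m (x i j *t y i l)^t*)) *m M) =
  \sum_i c i * \sum_j \sum_l qform (x i j *t y i l) M.
Proof.
rewrite mulmx_suml raddf_sum; apply: eq_bigr => i _.
rewrite mulmx_suml raddf_sum mulr_sumr; apply: eq_bigr => j _.
rewrite mulmx_suml raddf_sum mulr_sumr; apply: eq_bigr => l _.
by rewrite -scalemxAl /= mxtraceZ mxtrace_outer.
Qed.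

End SeparableStates.

Section LocalEnergy.
Variable R : realType.
Local Notation C := R[i].
Local Notation conj_local Ua Ub rho := ((Ua *t Ub) *m rho *m (Ua *t Ub)^t*).

Lemma RtoCE (x : R) : RtoC x = x%:C%C. Proof. by []. Qed.

Lemma Re_RtoCM (x : R) (z : C) : complex.Re (RtoC x * z) = x * complex.Re z.
Proof. by case: z => a b /=; rewrite mul0r subr0. Qed.

Lemma ge0_ReE (z : C) : 0 <= z -> z = (complex.Re z)%:C%C.
Proof. by move=> /ger0_real /RRe_real. Qed.

Lemma ge0_Re (z : C) : 0 <= z -> 0 <= complex.Re z.
Proof. by rewrite lecE => /andP[]. Qed.

Lemma sum_lt_witness (F : realDomainType) (I : finType) (a b : I -> F) :
  \sum_i a i < \sum_i b i -> exists i, a i < b i.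
Proof.
case: (pickP (fun i => a i < b i)) => [i ab _|/= ba]; first by exists i.
by rewrite ltNge ler_sum // => i _; rewrite leNgt ba.
Qed.

Definition normalize n (v : 'cV[C]_n) := (sqrtC (sqnorm v))^-1 *: v.

Lemma conj_invsqrtC (z : C) : 0 <= z -> ((sqrtC z)^-1)^* * (sqrtC z)^-1 = z^-1.
Proof.
move=> z_ge0; rewrite conj_Creal; last by rewrite rpredV sqrtC_real.
by rewrite -expr2 exprVn sqrtCK.
Qed.

Lemma sqnorm_normalize n (v : 'cV[C]_n) : v != 0 -> sqnorm (normalize v) = 1.
Proof.
rewrite -sqnorm_eq0 => v0; rewrite -qform1 qformZ qform1.
by rewrite conj_invsqrtC ?sqnorm_ge0 // mulVf.
Qed.

Lemma qform_normalize_tens m n (u : 'cV[C]_m) (w : 'cV[C]_n) M :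
  qform (normalize u *t normalize w) M = qform (u *t w) M / (sqnorm u * sqnorm w).
Proof.
rewrite tensmxZl tensmxZr scalerA qformZ rmorphM mulrACA.
by rewrite !conj_invsqrtC ?sqnorm_ge0 // mulrC invfM.
Qed.

Lemma normalize_product_lt m n (x : 'cV[C]_m) (y : 'cV[C]_n) (N : 'M[C]_(m * n)) (eps : R) :
  complex.Re (qform (x *t y) (N^t* *m N)) <
    eps * (complex.Re (sqnorm x) * complex.Re (sqnorm y)) ->
  exists (u : 'cV[C]_m) (w : 'cV[C]_n),
    [/\ sqnorm u = 1, sqnorm w = 1 & complex.Re (qform (u *t w) (N^t* *m N)) < eps].
Proof.
set X := complex.Re (sqnorm x); set Y := complex.Re (sqnorm y) => lt_eps.
have XY_neq0 : X * Y != 0.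
  apply: contraTneq lt_eps => ->; rewrite mulr0 -leNgt.
  exact/ge0_Re/qform_gram_ge0.
have XY_gt0 : 0 < X * Y by rewrite lt0r XY_neq0 mulr_ge0 ?ge0_Re ?sqnorm_ge0.
have /andP[X_neq0 Y_neq0] : (X != 0) && (Y != 0) by rewrite -negb_or -mulf_eq0.
have nz_of_Re k (v : 'cV[C]_k) : complex.Re (sqnorm v) != 0 -> v != 0.
  by rewrite -sqnorm_eq0; apply: contraNneq => ->.
exists (normalize x), (normalize y).
split; [exact/sqnorm_normalize/nz_of_Re|exact/sqnorm_normalize/nz_of_Re|].
rewrite qform_normalize_tens (ge0_ReE (qform_gram_ge0 _ _)) (ge0_ReE (sqnorm_ge0 x)).
rewrite (ge0_ReE (sqnorm_ge0 y)) -rmorphM -fmorphV -rmorphM /=.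
by rewrite ltr_pdivrMr // mulrC.
Qed.

Variables (da db : nat) (rho : 'M[C]_(da * db)) (Ua : 'M[C]_da) (Ub : 'M[C]_db).
Hypotheses (rho_sep : separable rho) (uA : unitary Ua) (uB : unitary Ub).

Lemma mxtrace_local_separable : \tr (conj_local Ua Ub rho) = 1.
Proof.
have [k [p [x [y [_ p1 x1 y1 ->]]]]] := separable_local_mixture rho_sep uA uB.
rewrite -[X in \tr X]mulmx1 mxtrace_mixture -[RHS](rmorph1 (@real_complex R)) -p1.
rewrite rmorph_sum; apply: eq_bigr => i _.
under eq_bigr do under eq_bigr do rewrite qform1 sqnorm_tens.
by under eq_bigr do rewrite -mulr_sumr y1 mulr1; rewrite x1 mulr1.
Qed.

Lemma local_separable_gram_ge0 (N : 'M[C]_(da * db)) :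
  0 <= \tr (conj_local Ua Ub rho *m (N^t* *m N)).
Proof.
have [k [p [x [y [p_ge0 _ _ _ ->]]]]] := separable_local_mixture rho_sep uA uB.
rewrite mxtrace_mixture sumr_ge0 // => i _; rewrite mulr_ge0 ?RtoCE ?ler0c //.
by do 2!apply: sumr_ge0 => ? _; exact: qform_gram_ge0.
Qed.

(* The energy is an average of the energies of the normalised product components. *)
Lemma local_separable_gram_witness (N : 'M[C]_(da * db)) (eps : R) :
  complex.Re (\tr (conj_local Ua Ub rho *m (N^t* *m N))) < eps ->
  exists (u : 'cV[C]_da) (w : 'cV[C]_db),
    [/\ sqnorm u = 1, sqnorm w = 1 & complex.Re (qform (u *t w) (N^t* *m N)) < eps].
Proof.
have [k [p [x [y [p_ge0 p1 x1 y1 ->]]]]] := separable_local_mixture rho_sep uA uB.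
pose X i j := complex.Re (sqnorm (x i j)).
pose Y i l := complex.Re (sqnorm (y i l)).
have epsE : eps = \sum_i \sum_j \sum_l eps * (p i * (X i j * Y i l)).
  rewrite -[LHS]mulr1 -p1 mulr_sumr; apply: eq_bigr => i _.
  have Xi1 : \sum_j X i j = 1 by rewrite -raddf_sum x1.
  have Yi1 : \sum_l Y i l = 1 by rewrite -raddf_sum y1.
  rewrite -[eps * p i]mulr1 -Xi1 mulr_sumr; apply: eq_bigr => j _.
  rewrite -[_ * X i j]mulr1 -Yi1 mulr_sumr; apply: eq_bigr => l _.
  by rewrite !mulrA.
rewrite mxtrace_mixture raddf_sum /= [X in _ < X]epsE.
under eq_bigr do rewrite Re_RtoCM raddf_sum /= mulr_sumr.
under eq_bigr do under eq_bigr do rewrite raddf_sum /= mulr_sumr.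
case/sum_lt_witness => i /sum_lt_witness [j /sum_lt_witness [l /= lt_ijl]].
have p_gt0 : 0 < p i.
  rewrite lt0r p_ge0 andbT; apply: contraTneq lt_ijl => ->.
  by rewrite !mul0r mulr0 ltxx.
apply: normalize_product_lt; rewrite -(ltr_pM2l p_gt0) mulrCA.
exact: lt_ijl.
Qed.

End LocalEnergy.

Section ProductMinimum.
Variable R : realType.
Local Notation C := R[i].

Section ComplexContinuity.
Variable n : nat.
Local Notation T := 'rV[R]_n.

Definition continuousC (f : T -> C) :=
  continuous (fun v => complex.Re (f v)) /\ continuous (fun v => complex.Im (f v)).

Lemma continuousC_cst (c : C) : continuousC (fun _ => c).
Proof. by split => x; apply: cst_continuous. Qed.

Lemma continuousC_complex (g h : T -> R) : continuous g -> continuous h ->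
  continuousC (fun v => Complex (g v) (h v)).
Proof. by []. Qed.

Lemma continuousCD (f g : T -> C) : continuousC f -> continuousC g ->
  continuousC (fun v => f v + g v).
Proof.
move=> [f1 f2] [g1 g2]; split => x.
  have -> : (fun v => complex.Re (f v + g v)) =
      (fun v => complex.Re (f v)) + (fun v => complex.Re (g v)).
    by apply: funext => v; rewrite raddfD.
  by apply: continuousD; [exact: f1|exact: g1].
have -> : (fun v => complex.Im (f v + g v)) =
    (fun v => complex.Im (f v)) + (fun v => complex.Im (g v)).
  by apply: funext => v; rewrite raddfD.
by apply: continuousD; [exact: f2|exact: g2].
Qed.

Lemma continuousCM (f g : T -> C) : continuousC f -> continuousC g ->
  continuousC (fun v => f v * g v).
Proof.
move=> [f1 f2] [g1 g2].
have ReM v : complex.Re (f v * g v) =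
    complex.Re (f v) * complex.Re (g v) - complex.Im (f v) * complex.Im (g v).
  by case: (f v) => ? ?; case: (g v).
have ImM v : complex.Im (f v * g v) =
    complex.Re (f v) * complex.Im (g v) + complex.Im (f v) * complex.Re (g v).
  by case: (f v) => ? ?; case: (g v).
split => x.
  have -> : (fun v => complex.Re (f v * g v)) =
      (fun v => complex.Re (f v)) \* (fun v => complex.Re (g v)) -
      (fun v => complex.Im (f v)) \* (fun v => complex.Im (g v)).
    by apply: funext => v; rewrite ReM.
  by apply: continuousB; apply: continuousM; [exact: f1|exact: g1|exact: f2|exact: g2].
have -> : (fun v => complex.Im (f v * g v)) =
    (fun v => complex.Re (f v)) \* (fun v => complex.Im (g v)) +
    (fun v => complex.Im (f v)) \* (fun v => complex.Re (g v)).
  by apply: funext => v; rewrite ImM.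
by apply: continuousD; apply: continuousM; [exact: f1|exact: g2|exact: f2|exact: g1].
Qed.

Lemma continuousC_conj (f : T -> C) : continuousC f -> continuousC (fun v => (f v)^*).
Proof.
move=> [f1 f2]; split => x.
  have -> : (fun v => complex.Re (f v)^*) = (fun v => complex.Re (f v)).
    by apply: funext => v; case: (f v).
  exact: f1.
have -> : (fun v => complex.Im (f v)^*) = (fun v => - complex.Im (f v)).
  by apply: funext => v; case: (f v).
by apply: continuousN; exact: f2.
Qed.

Lemma continuousC_sum k (F : 'I_k -> T -> C) : (forall i, continuousC (F i)) ->
  continuousC (fun v => \sum_i F i v).
Proof.
elim: k F => [|k IH] F cF.
  rewrite (_ : (fun v => _) = fun _ => 0); first exact: continuousC_cst.
  by apply: funext => v; rewrite big_ord0.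
rewrite (_ : (fun v => _) = fun v => \sum_(i < k) F (widen_ord (leqnSn k) i) v + F ord_max v).
  by apply: continuousCD; [apply: IH => i|].
by apply: funext => v; rewrite big_ord_recr.
Qed.

Lemma continuousC_qform m (X : T -> 'cV[C]_m) (M : 'M[C]_m) :
  (forall a, continuousC (fun v => X v a 0)) -> continuousC (fun v => qform (X v) M).
Proof.
move=> cX; rewrite (_ : (fun v => _) =
    fun v => \sum_a (\sum_b (X v b 0)^* * M b a) * X v a 0).
  apply: continuousC_sum => a; apply: continuousCM => //; apply: continuousC_sum => b.
  exact/continuousCM/continuousC_cst/continuousC_conj.
apply: funext => v; rewrite /qform !mxE; apply: eq_bigr => a _; rewrite !mxE.
by congr (_ * _); apply: eq_bigr => b _; rewrite !mxE.
Qed.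

End ComplexContinuity.

Variables da db : nat.
Local Notation n := ((da + da) + (db + db))%N.
Local Notation T := 'rV[R]_n.

Definition coords (u : 'cV[C]_da) (w : 'cV[C]_db) : T :=
  row_mx (row_mx (\row_j complex.Re (u j 0)) (\row_j complex.Im (u j 0)))
         (row_mx (\row_l complex.Re (w l 0)) (\row_l complex.Im (w l 0))).

Definition coords_a (v : T) : 'cV[C]_da :=
  \col_j Complex (v 0 (lshift _ (lshift da j))) (v 0 (lshift _ (rshift da j))).

Definition coords_b (v : T) : 'cV[C]_db :=
  \col_l Complex (v 0 (rshift _ (lshift db l))) (v 0 (rshift _ (rshift db l))).

Lemma coords_aK u w : coords_a (coords u w) = u.
Proof.
apply/matrixP => j z; rewrite [z]ord1 mxE !row_mxEl row_mxEr !mxE.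
by case: (u j 0).
Qed.

Lemma coords_bK u w : coords_b (coords u w) = w.
Proof.
apply/matrixP => j z; rewrite [z]ord1 mxE !row_mxEr row_mxEl !mxE.
by case: (w j 0).
Qed.

Lemma continuousC_coords_a j : continuousC (fun v => coords_a v j 0).
Proof.
have -> : (fun v => coords_a v j 0) =
    fun v => Complex (v 0 (lshift _ (lshift da j))) (v 0 (lshift _ (rshift da j))).
  by apply: funext => v; rewrite mxE.
by apply: continuousC_complex; apply: coord_continuous.
Qed.

Lemma continuousC_coords_b l : continuousC (fun v => coords_b v l 0).
Proof.
have -> : (fun v => coords_b v l 0) =
    fun v => Complex (v 0 (rshift _ (lshift db l))) (v 0 (rshift _ (rshift db l))).
  by apply: funext => v; rewrite mxE.
by apply: continuousC_complex; apply: coord_continuous.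
Qed.

Lemma sqnorm1_entry_bound m (u : 'cV[C]_m) j : sqnorm u = 1 ->
  -1 <= complex.Re (u j 0) <= 1 /\ -1 <= complex.Im (u j 0) <= 1.
Proof.
move=> u1; have : (complex.Re (u j 0))^+2 + (complex.Im (u j 0))^+2 <= 1.
  rewrite -(@lecR R) add_Re2_Im2 (_ : (1 : R)%:C%C = 1) // -u1 sqnormE.
  by rewrite (bigD1 j) //= lerDl sumr_ge0 // => i _; rewrite exprn_ge0.
have sq_le1 (r : R) : r^+2 <= 1 -> -1 <= r <= 1.
  by move=> r2; rewrite -ler_norml -(@expr_le1 _ 2) // real_normK // num_real.
by move=> h; split; apply: sq_le1; apply: le_trans h; rewrite ?lerDl ?lerDr sqr_ge0.
Qed.

(* The squares force the minimiser over the cube to consist of unit vectors. *)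
Definition penalty (K : 'M[C]_(da * db)) (v : T) : R :=
  complex.Re (qform (coords_a v *t coords_b v) K) +
  (complex.Re (sqnorm (coords_a v)) - 1)^+2 + (complex.Re (sqnorm (coords_b v)) - 1)^+2.

Lemma continuous_penalty K : continuous (penalty K).
Proof.
have cRe m (X : T -> 'cV[C]_m) M : (forall a, continuousC (fun v => X v a 0)) ->
    continuous (fun v => complex.Re (qform (X v) M)) by move=> cX; case: (continuousC_qform M cX).
have csq m (X : T -> 'cV[C]_m) : (forall a, continuousC (fun v => X v a 0)) ->
    continuous (fun v => (complex.Re (sqnorm (X v)) - 1)^+2).
  move=> cX x; rewrite (_ : (fun v => _) = (fun v => complex.Re (qform (X v) 1%:M) - 1) \*
      (fun v => complex.Re (qform (X v) 1%:M) - 1)).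
    by apply: continuousM; apply: continuousB;
      [exact: cRe|exact: cst_continuous|exact: cRe|exact: cst_continuous].
  by apply: funext => v /=; rewrite qform1 expr2.
have -> : penalty K =
    (fun v => complex.Re (qform (coords_a v *t coords_b v) K)) +
    (fun v => (complex.Re (sqnorm (coords_a v)) - 1)^+2) +
    (fun v => (complex.Re (sqnorm (coords_b v)) - 1)^+2) by [].
move=> x; apply: continuousD; [apply: continuousD|];
  [|apply: csq; exact: continuousC_coords_a|apply: csq; exact: continuousC_coords_b].
apply: cRe => a; rewrite (_ : (fun v => _) = fun v =>
    coords_a v (mxtens_unindex a).1 0 * coords_b v (mxtens_unindex a).2 0).
  exact: continuousCM (continuousC_coords_a _) (continuousC_coords_b _).
by apply: funext => v; rewrite mxE !ord1.
Qed.

Lemma product_gram_null (N : 'M[C]_(da * db)) :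
  (forall eps : R, 0 < eps -> exists (u : 'cV[C]_da) (w : 'cV[C]_db),
      [/\ sqnorm u = 1, sqnorm w = 1 & complex.Re (qform (u *t w) (N^t* *m N)) < eps]) ->
  exists (u : 'cV[C]_da) (w : 'cV[C]_db),
      [/\ sqnorm u = 1, sqnorm w = 1 & N^t* *m N *m (u *t w) = 0].
Proof.
move=> small; set K := N^t* *m N.
pose cube := [set v : T | forall i, `[(-1 : R), 1]%classic (v ord0 i)]%classic.
have cube_compact : compact cube.
  by apply: (@rV_compact _ n (fun _ => `[(-1 : R), 1]%classic)) => i; exact: segment_compact.
have cube0 : (cube !=set0)%classic by exists 0 => i /=; rewrite mxE in_itv /= lerN10 ler01.
have [c _ c_min] :=
  compact_EVT_min cube0 cube_compact (continuous_subspaceT (@continuous_penalty K)).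
have coords_cube u w : sqnorm u = 1 -> sqnorm w = 1 -> cube (coords u w).
  move=> u1 w1 i; rewrite /= in_itv /= /coords.
  case: (split_ordP i) => [i1 ->|i2 ->]; rewrite ?row_mxEl ?row_mxEr.
    by case: (split_ordP i1) => [j ->|j ->];
      rewrite ?row_mxEl ?row_mxEr mxE; case: (sqnorm1_entry_bound j u1).
  by case: (split_ordP i2) => [j ->|j ->];
    rewrite ?row_mxEl ?row_mxEr mxE; case: (sqnorm1_entry_bound j w1).
have penalty_le0 : penalty K c <= 0.
  rewrite leNgt; apply/negP => /small[u [w [u1 w1 lt_uw]]].
  have := c_min _ (mem_set (coords_cube u w u1 w1)).
  rewrite /penalty coords_aK coords_bK u1 w1 subrr expr0n /= !addr0.
  by move=> /le_lt_trans /(_ lt_uw); rewrite ltxx.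
move: penalty_le0; rewrite /penalty.
have := ge0_Re (qform_gram_ge0 N (coords_a c *t coords_b c)).
have := sqr_ge0 (complex.Re (sqnorm (coords_a c)) - 1).
have := sqr_ge0 (complex.Re (sqnorm (coords_b c)) - 1).
set q := complex.Re (qform _ _); set b := (_ - 1)^+2; set a := (_ - 1)^+2 => b0 a0 q0 sum_le0.
have /eqP : a = 0 by lra.
have /eqP : b = 0 by lra.
have q_eq0 : q = 0 by lra.
rewrite !sqrf_eq0 !subr_eq0 => /eqP b1 /eqP a1.
exists (coords_a c), (coords_b c); split.
- by rewrite (ge0_ReE (sqnorm_ge0 _)) a1.
- by rewrite (ge0_ReE (sqnorm_ge0 _)) b1.
by apply: qform_gram_eq0; rewrite (ge0_ReE (qform_gram_ge0 _ _)) -/K -/q q_eq0.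
Qed.

End ProductMinimum.

Section ProductStates.
Variable R : realType.
Local Notation C := R[i].

Lemma unitary1 m : unitary (1%:M : 'M[C]_m).
Proof. by apply/unitarymxP; rewrite trmxC1 mul1mx. Qed.

(* Gram-Schmidt applied to a matrix whose first row is [x^*] keeps that row. *)
Lemma unitary_first_row m (x : 'cV[C]_m.+1) : sqnorm x = 1 ->
  exists Q : 'M[C]_m.+1, Q \is unitarymx /\ Q *m x = col 0 1%:M.
Proof.
move=> x1; pose A : 'M[C]_m.+1 := \matrix_(i, j) (if i == 0 then (x^t*) 0 j else 0).
have rowA : row 0 A = x^t* by apply/rowP => j; rewrite !mxE eqxx.
have uS : schmidt A \is unitarymx by apply: schmidt_unitarymx.
have rowS : row 0 (schmidt A) = x^t*.
  have := row_schmidt_sub A 0.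
  rewrite (big_pred1 (0 : 'I_m.+1)); last first.
    by move=> k /=; rewrite leqn0; apply/idP/eqP => [/eqP k0|->//]; apply: val_inj.
  rewrite genmxE rowA => /sub_rVP[c xE].
  have S1 := sqnorm_row_unitary 0 uS; rewrite /sqnorm trmxCK in S1.
  have c_ge0 : 0 <= c.
    by have := form1_row_schmidt A 0; rewrite dotmxE rowA xE -scalemxAl mxE S1 mulr1.
  have : sqnorm x = c * c^*.
    rewrite /sqnorm -[X in _ *m X]trmxCK xE trmxCZ -scalemxAr -scalemxAl scalerA.
    by rewrite mxE S1 mulr1 mulrC.
  rewrite x1 conj_Creal ?ger0_real // -expr2 => /eqP; rewrite eq_sym -subr_eq0 subr_sqr_1.
  rewrite mulf_eq0 subr_eq0 addr_eq0 => /orP[/eqP c1|/eqP cN1].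
    by rewrite xE c1 scale1r.
  by move: c_ge0; rewrite cN1 oppr_ge0 ler10.
exists (schmidt A); split => //.
have -> : x = col 0 ((schmidt A)^t*).
  by rewrite -[x]trmxCK -rowS; apply/matrixP => i j; rewrite !mxE.
by rewrite [col 0 _]colE mulmxA (unitarymxP uS) -colE.
Qed.

Lemma unitary_transitive m (x y : 'cV[C]_m) : sqnorm x = 1 -> sqnorm y = 1 ->
  exists U : 'M[C]_m, unitary U /\ U *m x = y.
Proof.
case: m x y => [|m] x y x1 y1.
  by move: x1; rewrite sqnormE big_ord0 => /eqP; rewrite eq_sym oner_eq0.
have [Qx [uQx Qx1]] := unitary_first_row x1.
have [Qy [uQy Qy1]] := unitary_first_row y1.
exists (Qy^t* *m Qx); split; first by rewrite /unitary mul_unitarymx // trmxC_unitary.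
by rewrite -mulmxA Qx1 -Qy1 mulmxA (trmxC_unitaryK uQy) mul1mx.
Qed.

Lemma outer_density m (x : 'cV[C]_m) : sqnorm x = 1 -> density (x *m x^t*).
Proof.
move=> x1; split; last by rewrite mxtrace_mulC /mxtrace big_ord1.
split; first by apply/is_hermitianmxP; rewrite expr0 scale1r trmxCM trmxCK.
by move=> v; have := qform_gram_ge0 (x^t*) v; rewrite trmxCK.
Qed.

Lemma product_separable da db (x : 'cV[C]_da) (y : 'cV[C]_db) : sqnorm x = 1 -> sqnorm y = 1 ->
  separable ((x *m x^t*) *t (y *m y^t*)).
Proof.
move=> x1 y1; exists 1%N, (fun _ => 1), (fun _ => x *m x^t*), (fun _ => y *m y^t*).
split; first by move=> _; exact: ler01.
split; first by rewrite big_ord1.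
split; first by move=> _; split; exact: outer_density.
by rewrite big_ord1 (_ : RtoC 1 = 1) // scale1r.
Qed.

Lemma mxtrace_local_product da db (Ua : 'M[C]_da) (Ub : 'M[C]_db)
    (x : 'cV[C]_da) (y : 'cV[C]_db) (H : 'M[C]_(da * db)) :
  \tr ((Ua *t Ub) *m ((x *m x^t*) *t (y *m y^t*)) *m (Ua *t Ub)^t* *m H) =
  qform ((Ua *m x) *t (Ub *m y)) H.
Proof. by rewrite tensmx_conj -!mulmxA -!trmxCM !mulmxA tens_outer mxtrace_outer. Qed.

End ProductStates.

Section Negation.
Variable R : realType.
Local Notation C := R[i].

Lemma RtoCN (x : R) : RtoC (- x) = - RtoC x.
Proof. by rewrite !RtoCE rmorphN. Qed.

Lemma is_hermitianN n (H : 'M[C]_n) : is_hermitian H -> is_hermitian (- H).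
Proof. by move=> /is_hermitianmxP hH; apply/is_hermitianmxP; rewrite {1}hH !raddfN. Qed.

Lemma eigenvalueN n (H : 'M[C]_n) a : eigenvalue (- H) a -> eigenvalue H (- a).
Proof.
move=> /eigenvalueP[v vH v0]; apply/eigenvalueP; exists v => //.
by rewrite scaleNr -vH mulmxN opprK.
Qed.

Lemma max_eigenvalueN n (H : 'M[C]_n) E :
  is_max_eigenvalue H E -> is_min_eigenvalue (- H) (- E).
Proof.
move=> [/eigenvalueP[v vH v0] E_max]; split.
  by apply/eigenvalueP; exists v; rewrite // mulmxN vH RtoCN scaleNr.
by move=> a /eigenvalueN /E_max; rewrite RtoCN lerNl.
Qed.

Lemma local_energiesN da db (rho H : 'M[C]_(da * db)) x :
  local_energies rho H x -> local_energies rho (- H) (- x).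
Proof.
move=> [Ua [Ub [uA [uB ->]]]]; exists Ua, Ub; do 2!split => //.
by rewrite mulmxN !raddfN.
Qed.

Lemma product_eigenvectorN da db (H : 'M[C]_(da * db)) E :
  eigenspace_has_product_vector (- H) (- E) -> eigenspace_has_product_vector H E.
Proof.
move=> [u [w [u0 [w0 uwH]]]]; exists u, w; do 2!split => //.
by apply: oppr_inj; rewrite -mulNmx uwH RtoCN scaleNr.
Qed.

End Negation.

Section MinimalEnergy.
Variable R : realType.
Local Notation C := R[i].

Lemma min_eigenvalue_gram n (H : 'M[C]_n) E0 : is_hermitian H -> is_min_eigenvalue H E0 ->
  exists N : 'M[C]_n, H = N^t* *m N + (RtoC E0)%:M.
Proof.
move=> hH [_ E0_min]; have [i|N HN] := hermitian_gram_shift (s := 1) (c := RtoC E0) hH.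
  by rewrite mul1r subr_ge0; exact/E0_min/eigenvalue_spectral_diag.
by exists N; rewrite -HN scale1r subrK.
Qed.

Variables (da db : nat) (H : 'M[C]_(da * db)) (E0 : R) (N : 'M[C]_(da * db)).
Hypothesis HE : H = N^t* *m N + (RtoC E0)%:M.

Lemma local_energyE rho Ua Ub : separable rho -> unitary Ua -> unitary Ub ->
  complex.Re (\tr ((Ua *t Ub) *m rho *m (Ua *t Ub)^t* *m H)) =
  E0 + complex.Re (\tr ((Ua *t Ub) *m rho *m (Ua *t Ub)^t* *m (N^t* *m N))).
Proof.
move=> sep uA uB; rewrite {1}HE mulmxDr mxtraceD mul_mx_scalar mxtraceZ.
by rewrite mxtrace_local_separable // mulr1 raddfD addrC.
Qed.

Lemma local_energy_ge rho x : separable rho -> local_energies rho H x -> E0 <= x.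
Proof.
move=> sep [Ua [Ub [uA [uB ->]]]]; rewrite local_energyE // lerDl.
exact/ge0_Re/local_separable_gram_ge0.
Qed.

Lemma product_eigenvector_of_energies :
  (forall eps : R, 0 < eps ->
     exists rho x, [/\ separable rho, local_energies rho H x & x < E0 + eps]) ->
  eigenspace_has_product_vector H E0.
Proof.
move=> small; have [|u [w [u1 w1 Nuw]]] := product_gram_null (N := N).
  move=> eps /small[rho [_ [sep [Ua [Ub [uA [uB ->]]]] lt_eps]]].
  apply: (local_separable_gram_witness sep uA uB).
  by move: lt_eps; rewrite local_energyE // ltrD2l.
exists u, w; split; [exact: sqnorm_eq1_neq0|split; [exact: sqnorm_eq1_neq0|]].
by rewrite HE mulmxDl Nuw add0r mul_scalar_mx.
Qed.

End MinimalEnergy.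

Section ParallelCapacity.
Variable R : realType.
Local Notation C := R[i].
Variables (da db : nat) (H : 'M[C]_(da * db)) (E0 Emax : R).
Hypotheses (hH : is_hermitian H) (hmin : is_min_eigenvalue H E0)
  (hmax : is_max_eigenvalue H Emax).

Lemma local_energy_bounds rho x : separable rho -> local_energies rho H x -> E0 <= x <= Emax.
Proof.
move=> sep Ex; have [N0 HN0] := min_eigenvalue_gram hH hmin.
have [N1 HN1] := min_eigenvalue_gram (is_hermitianN hH) (max_eigenvalueN hmax).
rewrite (local_energy_ge HN0 sep Ex) /= -lerN2.
exact/(local_energy_ge HN1 sep)/local_energiesN.
Qed.

Lemma local_energies_neq0 rho : (local_energies rho H !=set0)%classic.
Proof. by eexists; exists 1%:M, 1%:M; split; [exact: unitary1|split; [exact: unitary1|]]. Qed.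

Lemma has_sup_local_energies rho : separable rho -> has_sup (local_energies rho H).
Proof.
move=> sep; split; first exact: local_energies_neq0.
by exists Emax => x /(local_energy_bounds sep)/andP[].
Qed.

Lemma has_inf_local_energies rho : separable rho -> has_inf (local_energies rho H).
Proof.
move=> sep; split; first exact: local_energies_neq0.
by exists E0 => x /(local_energy_bounds sep)/andP[].
Qed.

Lemma sup_local_energies_le rho : separable rho -> sup (local_energies rho H) <= Emax.
Proof.
move=> sep; apply: ge_sup; first exact: local_energies_neq0.
by move=> x /(local_energy_bounds sep)/andP[].
Qed.

Lemma inf_local_energies_ge rho : separable rho -> E0 <= inf (local_energies rho H).
Proof.
move=> sep; apply: lb_le_inf; first exact: local_energies_neq0.
by move=> x /(local_energy_bounds sep)/andP[].
Qed.

Lemma separable_state_exists : exists rho : 'M[C]_(da * db), separable rho.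
Proof.
have [v _ v0] := eigenvalueP hmin.1.
have [k _] : exists k : 'I_(da * db), v 0 k != 0.
  apply/existsP; apply: contraR v0 => /existsPn v0; apply/eqP/rowP => k.
  by rewrite mxE; apply/eqP; have := v0 k; rewrite negbK.
have unit_delta m (a : 'I_m) : sqnorm (delta_mx a 0 : 'cV[C]_m) = 1.
  rewrite sqnormE (bigD1 a) //= big1 ?addr0 => [|i /negbTE ia]; rewrite mxE ?ia ?eqxx //=.
    by rewrite normr1 expr1n.
  by rewrite normr0 expr0n.
case: (mxtens_indexP k) => a b.
pose x : 'cV[C]_da := delta_mx a 0; pose y : 'cV[C]_db := delta_mx b 0.
by exists ((x *m x^t*) *t (y *m y^t*)); apply: product_separable; apply: unit_delta.
Qed.

Lemma CP_le rho : separable rho -> CP rho H <= Emax - E0.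
Proof. by move=> sep; rewrite /CP lerB ?sup_local_energies_le ?inf_local_energies_ge. Qed.

Lemma has_sup_separable_capacities :
  has_sup [set x | exists rho, separable rho /\ x = CP rho H]%classic.
Proof.
split; first by have [rho sep] := separable_state_exists; exists (CP rho H), rho.
by exists (Emax - E0) => _ [rho [sep ->]]; exact: CP_le.
Qed.

(* Start in the product ground state; local unitaries rotate it onto the product top state. *)
Lemma CP1_of_product_eigenvectors : eigenspace_has_product_vector H E0 ->
  eigenspace_has_product_vector H Emax -> CP1 H = Emax - E0.
Proof.
have unit_eigen E : eigenspace_has_product_vector H E -> exists u w,
    [/\ sqnorm u = 1, sqnorm w = 1 & H *m (u *t w) = RtoC E *: (u *t w)].
  move=> [u [w [u0 [w0 uwE]]]]; exists (normalize u), (normalize w).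
  split; rewrite ?sqnorm_normalize //.
  by rewrite tensmxZl tensmxZr scalerA -scalemxAr uwE !scalerA mulrC.
move=> /unit_eigen[u0 [w0 [u01 w01 E0uw]]] /unit_eigen[u1 [w1 [u11 w11 Emaxuw]]].
have [Ua [uA Uu]] := unitary_transitive u01 u11.
have [Ub [uB Uw]] := unitary_transitive w01 w11.
set rho := (u0 *m u0^t*) *t (w0 *m w0^t*).
have sep : separable rho by exact: product_separable.
have energy_E0 : local_energies rho H E0.
  exists 1%:M, 1%:M; split; [exact: unitary1|split; [exact: unitary1|]].
  by rewrite mxtrace_local_product !mul1mx (qform_eigen E0uw) // sqnorm_tens u01 w01 mulr1.
have energy_Emax : local_energies rho H Emax.
  exists Ua, Ub; do 2!split => //.
  by rewrite mxtrace_local_product Uu Uw (qform_eigen Emaxuw) // sqnorm_tens u11 w11 mulr1.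
have CP_rho : CP rho H = Emax - E0.
  rewrite /CP; congr (_ - _); apply/le_anti.
    rewrite sup_local_energies_le //=.
    by apply: sup_upper_bound; first exact: has_sup_local_energies.
  rewrite inf_local_energies_ge // andbT.
  by apply: ge_inf; first exact: (has_inf_local_energies sep).2.
apply/le_anti/andP; split.
  by apply: ge_sup; [exact: has_sup_separable_capacities.1|move=> _ [r [sepr ->]]; exact: CP_le].
by rewrite -{1}CP_rho; apply: sup_upper_bound; [exact: has_sup_separable_capacities|exists rho].
Qed.

Lemma nearly_optimal_state (eps : R) : CP1 H = Emax - E0 -> 0 < eps ->
  exists rho, [/\ separable rho, inf (local_energies rho H) < E0 + eps &
                  Emax - eps < sup (local_energies rho H)].
Proof.
move=> CP1E eps_gt0.
have [_ [rho [sep ->]] CP_gt] := sup_adherent eps_gt0 has_sup_separable_capacities.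
move: CP_gt; rewrite -/(CP1 H) CP1E /CP => CP_gt.
have := sup_local_energies_le sep; have := inf_local_energies_ge sep.
by exists rho; split => //; lra.
Qed.

Lemma min_product_eigenvector : CP1 H = Emax - E0 -> eigenspace_has_product_vector H E0.
Proof.
move=> CP1E; have [N HN] := min_eigenvalue_gram hH hmin.
apply: (product_eigenvector_of_energies HN) => eps eps_gt0.
have [rho [sep inf_lt _]] := nearly_optimal_state CP1E eps_gt0.
have [|x Ex x_lt] := @inf_adherent _ _ (E0 + eps - inf (local_energies rho H)) _
  (has_inf_local_energies sep); first by lra.
by exists rho, x; split => //; lra.
Qed.

Lemma max_product_eigenvector : CP1 H = Emax - E0 -> eigenspace_has_product_vector H Emax.
Proof.
move=> CP1E; have [N HN] := min_eigenvalue_gram (is_hermitianN hH) (max_eigenvalueN hmax).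
apply/product_eigenvectorN/(product_eigenvector_of_energies HN) => eps eps_gt0.
have [rho [sep _ sup_gt]] := nearly_optimal_state CP1E eps_gt0.
have [|x Ex x_gt] := @sup_adherent _ _ (sup (local_energies rho H) - (Emax - eps)) _
  (has_sup_local_energies sep); first by lra.
by exists rho, (- x); split; [|exact: local_energiesN|lra].
Qed.

End ParallelCapacity.

Theorem mainTheorem2 (R : realType) (da db : nat) (H : 'M[R[i]]_(da * db))
  (E0 Emax : R) :
  is_hermitian H ->
  is_min_eigenvalue H E0 ->
  is_max_eigenvalue H Emax ->
  (CP1 H = Emax - E0 <->
   eigenspace_has_product_vector H E0 /\ eigenspace_has_product_vector H Emax).
Proof.
move=> hH hmin hmax; split.
  move=> CP1E; split; first exact: min_product_eigenvector hH hmin hmax CP1E.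
  exact: max_product_eigenvector hH hmin hmax CP1E.
by case; exact: CP1_of_product_eigenvectors hH hmin hmax.
Qed.
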